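(* Let $\{\lambda_k\}_{k\ge 0}$ be a sequence of positive scalars and, for each $k$, let $x_{\lambda_k}^*$ denote the unique minimizer of $f+\lambda_k h$ over $X$. Then: (a) for all $k\ge 1$, $\displaystyle \|x_{\lambda_k}^*-x_{\lambda_{k-1}}^*\|\le \frac{C_h}{\mu_h}\left|1-\frac{\lambda_{k-1}}{\lambda_k}\right|$; (b) if $\lambda_k\to 0$, then $x_{\lambda_k}^*\to x_h^*$.
   Context: Standing setup: $X\subset\mathbb{R}^n$ is nonempty, compact and convex. $f_1,\dots,f_m:\mathbb{R}^n\to\mathbb{R}$ are convex (possibly nondifferentiable) functions and $f=\sum_{i=1}^m f_i$. $h:\mathbb{R}^n\to\mathbb{R}$ is strongly convex with parameter $\mu_h>0$ (possibly nondifferentiable), i.e. $h(y)\ge h(x)+g^T(y-x)+\frac{\mu_h}{2}\|y-x\|^2$ for all $x,y$ and all $g\in\partial h(x)$. Let $f^*=\min_{x\in X}f(x)$, $X^*=\arg\min_{x\in X}f(x)$, and let $x_h^*$ be the unique minimizer of $h$ over $X^*$ (the bilevel problem: minimize $h(x)$ subject to $x\in X^*$). For $\lambda>0$, $x_\lambda^*$ denotes the unique minimizer of $f+\lambda h$ over $X$. $C_f,C_h$ are constants such that $\|g\|\le C_f$ for every $g\in\partial f_i(x)$, $i=1,\dots,m$, $x\in X$, and $\|g\|\le C_h$ for every $g\in\partial h(x)$, $x\in X$. $\|\cdot\|$ is the Euclidean norm. *)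

(* classical reals. Points of R^n are represented as
   functions nat -> R vanishing at every index >= n (predicate inRn). *)
From Stdlib Require Import Reals Lra.
Open Scope R_scope.

Definition vec := nat -> R.

Definition inRn (n : nat) (x : vec) : Prop := forall i, (n <= i)%nat -> x i = 0.

Fixpoint sumR (n : nat) (F : nat -> R) : R :=
  match n with
  | O => 0
  | S k => sumR k F + F k
  end.

Definition vadd (x y : vec) : vec := fun i => x i + y i.
Definition vsub (x y : vec) : vec := fun i => x i - y i.
Definition vscal (a : R) (x : vec) : vec := fun i => a * x i.

Definition dot (n : nat) (x y : vec) : R := sumR n (fun i => x i * y i).
Definition norm (n : nat) (x : vec) : R := sqrt (dot n x x).

Definition convex_set (n : nat) (X : vec -> Prop) : Prop :=
  forall x y t, X x -> X y -> 0 <= t <= 1 ->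
    X (vadd (vscal t x) (vscal (1 - t) y)).

(* sequential compactness of a subset of R^n (equivalent to compactness
   in the metric space R^n) *)
Definition seq_compact (n : nat) (X : vec -> Prop) : Prop :=
  forall u : nat -> vec, (forall k, X (u k)) ->
    exists (phi : nat -> nat) (l : vec),
      (forall k, (phi k < phi (S k))%nat) /\ X l /\
      Un_cv (fun k => norm n (vsub (u (phi k)) l)) 0.

Definition convex_fun (n : nat) (F : vec -> R) : Prop :=
  forall x y t, inRn n x -> inRn n y -> 0 <= t <= 1 ->
    F (vadd (vscal t x) (vscal (1 - t) y)) <= t * F x + (1 - t) * F y.

Definition subgrad (n : nat) (F : vec -> R) (x g : vec) : Prop :=
  inRn n g /\ forall y, inRn n y -> F y >= F x + dot n g (vsub y x).

Definition strongly_convex (n : nat) (F : vec -> R) (mu : R) : Prop :=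
  convex_fun n F /\
  forall x y g, inRn n x -> inRn n y -> subgrad n F x g ->
    F y >= F x + dot n g (vsub y x) + mu / 2 * (norm n (vsub y x)) ^ 2.

Definition is_min_on (F : vec -> R) (S : vec -> Prop) (x : vec) : Prop :=
  S x /\ forall y, S y -> F x <= F y.

Definition argmin_set (F : vec -> R) (S : vec -> Prop) : vec -> Prop :=
  fun x => is_min_on F S x.

Definition sumfun (m : nat) (fs : nat -> vec -> R) : vec -> R :=
  fun x => sumR m (fun i => fs i x).

(* A convex function finite on R^n has a subgradient at every
   point: a linear functional dominated by a convex [p] with [p 0 = 0] extends
   from R^k to R^(k+1) (Hahn-Banach, one coordinate at a time).  Hence [h] is
   C_h-Lipschitz on X, and strong convexity yields the segment inequality
   h(tx + (1-t)y) <= t h(x) + (1-t) h(y) - mu/2 t(1-t) |x - y|^2.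

   (a) Move a = x_{lam_k} and b = x_{lam_(k-1)} a fraction t towards each
   other.  Optimality of a and b, convexity of f and the segment inequality give
   lam_k mu (1-t) |a-b|^2 <= |lam_(k-1) - lam_k| C_h |a-b|; let t -> 0.

   (b) Every cluster point l of x_{lam_k} in the compact X minimizes f over X
   (pass to the limit in the optimality of x_{lam_k}, using lam_k -> 0) and
   satisfies h(l) <= h(x_h), because h(x_{lam_k}) <= h(x_h).  As h is strongly
   convex and the solution set X_f of f is convex, the minimizer of h over X_f
   is unique, so l = x_h. *)

From Stdlib Require Import Reals Lra Lia Psatz FunctionalExtensionality ClassicalEpsilon Classical.
Open Scope R_scope.

Lemma sumR_ext n F G : (forall i, (i < n)%nat -> F i = G i) -> sumR n F = sumR n G.
Proof.
  induction n as [|n IH]; simpl; intros H; [reflexivity|].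
  rewrite IH by (intros; apply H; lia). rewrite H by lia. reflexivity.
Qed.

Lemma sumR_add n F G : sumR n (fun i => F i + G i) = sumR n F + sumR n G.
Proof. induction n as [|n IH]; simpl; [ring|]. rewrite IH; ring. Qed.

Lemma sumR_scal n c F : sumR n (fun i => c * F i) = c * sumR n F.
Proof. induction n as [|n IH]; simpl; [ring|]. rewrite IH; ring. Qed.

Lemma sumR_nonneg n F : (forall i, (i < n)%nat -> 0 <= F i) -> 0 <= sumR n F.
Proof.
  induction n as [|n IH]; simpl; intros H; [lra|].
  assert (0 <= sumR n F) by (apply IH; intros; apply H; lia).
  assert (0 <= F n) by (apply H; lia). lra.
Qed.

Ltac dot_lin :=
  unfold dot; rewrite <- ?sumR_scal, <- ?sumR_add; apply sumR_ext;
  intros; cbv beta; unfold vsub, vadd, vscal; ring.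

Ltac vec_ext :=
  let i := fresh "i" in
  apply functional_extensionality; intro i; unfold vadd, vsub, vscal; ring.

Lemma dot_nonneg n x : 0 <= dot n x x.
Proof. apply sumR_nonneg. intros. nra. Qed.

Lemma dot_self_eq0 n x : dot n x x = 0 -> forall i, (i < n)%nat -> x i = 0.
Proof.
  induction n as [|n IH]; intros H i Hi; [lia|].
  unfold dot in H; simpl in H.
  assert (0 <= sumR n (fun i => x i * x i)) by apply (dot_nonneg n x).
  destruct (Nat.eq_dec i n) as [->|Hin]; [nra|].
  apply IH; [unfold dot; nra | lia].
Qed.

Lemma dot_Cauchy_Schwarz n x y : Rabs (dot n x y) <= norm n x * norm n y.
Proof.
  set (A := dot n y y); set (B := dot n x y); set (C := dot n x x).
  assert (HA : 0 <= A) by apply dot_nonneg.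
  assert (HC : 0 <= C) by apply dot_nonneg.
  assert (Hq : forall s t, 0 <= (s * s) * C + (-2 * s * t) * B + (t * t) * A).
  { intros s t.
    replace ((s * s) * C + (-2 * s * t) * B + (t * t) * A)
      with (dot n (vsub (vscal s x) (vscal t y)) (vsub (vscal s x) (vscal t y)))
      by (unfold A, B, C; dot_lin).
    apply dot_nonneg. }
  assert (HBCA : B * B <= C * A).
  { destruct (Req_dec A 0) as [A0|A0].
    - assert (B0 : B = 0).
      { unfold B, dot. rewrite (sumR_ext n _ (fun _ => 0 * 0)), sumR_scal; [ring|].
        intros i Hi. rewrite (dot_self_eq0 n y A0 i Hi). ring. }
      rewrite B0. nra.
    - specialize (Hq A B). nra. }
  rewrite <- sqrt_Rsqr_abs. unfold norm. fold A C. rewrite <- sqrt_mult by assumption.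
  apply sqrt_le_1_alt. unfold Rsqr. lra.
Qed.

Lemma norm_nonneg n x : 0 <= norm n x.
Proof. apply sqrt_pos. Qed.

Lemma norm_sq n x : norm n x * norm n x = dot n x x.
Proof. apply sqrt_sqrt, dot_nonneg. Qed.

Lemma norm_scal n a x : norm n (vscal a x) = Rabs a * norm n x.
Proof.
  unfold norm.
  replace (dot n (vscal a x) (vscal a x)) with (Rsqr a * dot n x x) by (unfold Rsqr; dot_lin).
  rewrite sqrt_mult, sqrt_Rsqr_abs by (apply Rle_0_sqr || apply dot_nonneg). reflexivity.
Qed.

Lemma norm_vsub_sym n x y : norm n (vsub x y) = norm n (vsub y x).
Proof. unfold norm. f_equal. dot_lin. Qed.

Lemma inRn_add n x y : inRn n x -> inRn n y -> inRn n (vadd x y).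
Proof. intros Hx Hy i Hi. unfold vadd. rewrite Hx, Hy by assumption. ring. Qed.

Lemma inRn_sub n x y : inRn n x -> inRn n y -> inRn n (vsub x y).
Proof. intros Hx Hy i Hi. unfold vsub. rewrite Hx, Hy by assumption. ring. Qed.

Lemma inRn_scal n a x : inRn n x -> inRn n (vscal a x).
Proof. intros Hx i Hi. unfold vscal. rewrite Hx by assumption. ring. Qed.

Lemma inRn_mono k n x : (k <= n)%nat -> inRn k x -> inRn n x.
Proof. intros Hkn Hx i Hi. apply Hx. lia. Qed.

Lemma Rdiv_le_Rdiv_cross a b s t : 0 < s -> 0 < t -> t * a <= s * b -> a / s <= b / t.
Proof.
  intros Hs Ht H.
  replace (a / s) with ((t * a) * / (s * t)) by (field; lra).
  replace (b / t) with ((s * b) * / (s * t)) by (field; lra).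
  apply Rmult_le_compat_r; [left; apply Rinv_0_lt_compat; nra | exact H].
Qed.

Definition vzero : vec := fun _ => 0.
Definition basis_vec (k : nat) : vec := fun i => if Nat.eqb i k then 1 else 0.
Definition vtrunc (k : nat) (u : vec) : vec := fun i => if Nat.ltb i k then u i else 0.

Lemma inRn_vzero k : inRn k vzero.
Proof. intros i _. reflexivity. Qed.

Lemma inRn_basis_vec k : inRn (S k) (basis_vec k).
Proof. intros i Hi. unfold basis_vec. destruct (Nat.eqb_spec i k); [lia | reflexivity]. Qed.

Lemma inRn_vtrunc k u : inRn k (vtrunc k u).
Proof. intros i Hi. unfold vtrunc. destruct (Nat.ltb_spec i k); [lia | reflexivity]. Qed.

Lemma vtrunc_split k u : inRn (S k) u -> u = vadd (vtrunc k u) (vscal (u k) (basis_vec k)).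
Proof.
  intros Hu. apply functional_extensionality; intro i.
  unfold vadd, vscal, vtrunc, basis_vec.
  destruct (Nat.ltb_spec i k), (Nat.eqb_spec i k); subst; try lia; try ring.
  rewrite Hu by lia. ring.
Qed.

Lemma dot_succ_basis k g c u : inRn k g ->
  dot (S k) (vadd g (vscal c (basis_vec k))) u = dot k g (vtrunc k u) + c * u k.
Proof.
  intros Hg. unfold dot. simpl. f_equal.
  - apply sumR_ext. intros i Hi. unfold vadd, vscal, basis_vec, vtrunc.
    destruct (Nat.eqb_spec i k); [lia|]. destruct (Nat.ltb_spec i k); [ring | lia].
  - unfold vadd, vscal, basis_vec. rewrite Nat.eqb_refl, (Hg k) by lia. ring.
Qed.

Section DominatedFunctional.

Variables (n : nat) (p : vec -> R).
Hypothesis p_convex : convex_fun n p.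
Hypothesis p_vzero : p vzero = 0.

Section Extension.

Variables (k : nat) (g : vec).
Hypothesis k_lt_n : (k < n)%nat.
Hypothesis g_inRn : inRn k g.
Hypothesis g_dominated : forall u, inRn k u -> dot k g u <= p u.

Let e := basis_vec k.

Lemma inRn_succ_lift x : inRn k x -> inRn (S k) x.
Proof. apply inRn_mono. lia. Qed.

Lemma inRn_succ_ambient x : inRn (S k) x -> inRn n x.
Proof. apply inRn_mono. lia. Qed.

(* The convex combination of [u - s e] and [v + t e] with weights [t/(s+t)] and
   [s/(s+t)] has no [e]-component, so [g] is dominated by [p] there. *)
Lemma dominated_extension_gap u v s t : inRn k u -> inRn k v -> 0 < s -> 0 < t ->
  t * (dot k g u - p (vsub u (vscal s e))) <= s * (p (vadd v (vscal t e)) - dot k g v).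
Proof.
  intros Hu Hv Hs Ht.
  set (a := t / (s + t)).
  assert (Ha : a * (s + t) = t) by (unfold a; field; lra).
  assert (Ha01 : 0 <= a <= 1).
  { split; [apply Rlt_le, Rdiv_lt_0_compat; lra | nra]. }
  set (w := vadd (vscal a u) (vscal (1 - a) v)).
  assert (Hw : w = vadd (vscal a (vsub u (vscal s e))) (vscal (1 - a) (vadd v (vscal t e)))).
  { apply functional_extensionality; intro i. unfold w, vadd, vscal, vsub.
    replace (1 - a) with (s / (s + t)) by (unfold a; field; lra). unfold a. field. lra. }
  assert (Hdom := g_dominated w (inRn_add _ _ _ (inRn_scal _ _ _ Hu) (inRn_scal _ _ _ Hv))).
  replace (dot k g w) with (a * dot k g u + (1 - a) * dot k g v) in Hdom by (unfold w; dot_lin).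
  assert (He : inRn (S k) e) by apply inRn_basis_vec.
  assert (Hconv := p_convex (vsub u (vscal s e)) (vadd v (vscal t e)) a
    (inRn_succ_ambient _ (inRn_sub _ _ _ (inRn_succ_lift _ Hu) (inRn_scal _ _ _ He)))
    (inRn_succ_ambient _ (inRn_add _ _ _ (inRn_succ_lift _ Hv) (inRn_scal _ _ _ He))) Ha01).
  rewrite <- Hw in Hconv.
  assert (Hst : 0 <= s + t) by lra.
  pose proof (Rmult_le_compat_l _ _ _ Hst (Rle_trans _ _ _ Hdom Hconv)) as Hcomb.
  assert (Hscale : forall x y, (s + t) * (a * x + (1 - a) * y) = t * x + s * y)
    by (intros; unfold a; field; lra).
  rewrite !Hscale in Hcomb. lra.
Qed.

Lemma dominated_extension_coef : exists c, forall w r, inRn k w ->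
  dot k g w + c * r <= p (vadd w (vscal r e)).
Proof.
  set (A := fun x => exists u s, inRn k u /\ 0 < s /\
                                 x = (dot k g u - p (vsub u (vscal s e))) / s).
  assert (Hub : forall v t, inRn k v -> 0 < t ->
                  is_upper_bound A ((p (vadd v (vscal t e)) - dot k g v) / t)).
  { intros v t Hv Ht x (u & s & Hu & Hs & ->).
    apply Rdiv_le_Rdiv_cross; auto. apply dominated_extension_gap; assumption. }
  destruct (completeness A) as [c [Hc_ub Hc_least]].
  { eexists. apply (Hub vzero 1 (inRn_vzero k)). lra. }
  { eexists. exists vzero, 1. split; [apply inRn_vzero|]. split; [lra | reflexivity]. }
  exists c. intros w r Hw.
  destruct (Rtotal_order r 0) as [Hr|[->|Hr]].
  - assert (Hmem : A ((dot k g w - p (vsub w (vscal (- r) e))) / (- r))).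
    { exists w, (- r). split; [assumption|]. split; [lra | reflexivity]. }
    specialize (Hc_ub _ Hmem).
    replace (vsub w (vscal (- r) e)) with (vadd w (vscal r e)) in Hc_ub by vec_ext.
    apply Rmult_le_compat_r with (r := - r) in Hc_ub; [|lra].
    replace ((dot k g w - p (vadd w (vscal r e))) / - r * - r)
      with (dot k g w - p (vadd w (vscal r e))) in Hc_ub by (field; lra).
    lra.
  - replace (vadd w (vscal 0 e)) with w by vec_ext.
    rewrite Rmult_0_r, Rplus_0_r. apply g_dominated, Hw.
  - specialize (Hc_least _ (Hub w r Hw Hr)).
    apply Rmult_le_compat_r with (r := r) in Hc_least; [|lra].
    replace ((p (vadd w (vscal r e)) - dot k g w) / r * r)
      with (p (vadd w (vscal r e)) - dot k g w) in Hc_least by (field; lra).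
    lra.
Qed.

Lemma dominated_extension : exists g', inRn (S k) g' /\
  forall u, inRn (S k) u -> dot (S k) g' u <= p u.
Proof.
  destruct dominated_extension_coef as [c Hc].
  exists (vadd g (vscal c e)). split.
  - apply inRn_add; [apply inRn_succ_lift, g_inRn | apply inRn_scal, inRn_basis_vec].
  - intros u Hu. unfold e. rewrite dot_succ_basis by exact g_inRn.
    pose proof (Hc (vtrunc k u) (u k) (inRn_vtrunc k u)) as Hcu.
    unfold e in Hcu. rewrite <- (vtrunc_split k u Hu) in Hcu. exact Hcu.
Qed.

End Extension.

Lemma dominated_functional_exists k : (k <= n)%nat ->
  exists g, inRn k g /\ forall u, inRn k u -> dot k g u <= p u.
Proof.
  induction k as [|k IH]; intros Hkn.
  - exists vzero. split; [apply inRn_vzero|]. intros u Hu.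
    replace u with vzero by (apply functional_extensionality; intro i; symmetry; apply Hu; lia).
    rewrite p_vzero. unfold dot. simpl. lra.
  - destruct IH as (g & Hg & Hdom); [lia|].
    apply (dominated_extension k g); [lia | exact Hg | exact Hdom].
Qed.

End DominatedFunctional.

Lemma subgrad_exists n F x : convex_fun n F -> inRn n x -> exists g, subgrad n F x g.
Proof.
  intros HF Hx.
  set (p := fun d => F (vadd x d) - F x).
  assert (Hp : convex_fun n p).
  { intros d1 d2 t H1 H2 Ht. unfold p.
    replace (vadd x (vadd (vscal t d1) (vscal (1 - t) d2)))
      with (vadd (vscal t (vadd x d1)) (vscal (1 - t) (vadd x d2))) by vec_ext.
    pose proof (HF (vadd x d1) (vadd x d2) t (inRn_add _ _ _ Hx H1) (inRn_add _ _ _ Hx H2) Ht).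
    lra. }
  assert (Hp0 : p vzero = 0).
  { unfold p. replace (vadd x vzero) with x by (unfold vzero; vec_ext). ring. }
  destruct (dominated_functional_exists n p Hp Hp0 n (le_n n)) as (g & Hg & Hdom).
  exists g. split; [exact Hg|]. intros y Hy.
  specialize (Hdom (vsub y x) (inRn_sub _ _ _ Hy Hx)). unfold p in Hdom.
  replace (vadd x (vsub y x)) with y in Hdom by vec_ext. lra.
Qed.

Lemma strongly_convex_segment n h mu x y t :
  strongly_convex n h mu -> inRn n x -> inRn n y -> 0 <= t <= 1 ->
  h (vadd (vscal t x) (vscal (1 - t) y))
    <= t * h x + (1 - t) * h y - mu / 2 * (t * (1 - t)) * dot n (vsub x y) (vsub x y).
Proof.
  intros [Hc Hs] Hx Hy Ht.
  set (z := vadd (vscal t x) (vscal (1 - t) y)).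
  assert (Hz : inRn n z) by (apply inRn_add; apply inRn_scal; assumption).
  destruct (subgrad_exists n h z Hc Hz) as [g Hg].
  assert (H1 := Hs z x g Hz Hx Hg). assert (H2 := Hs z y g Hz Hy Hg).
  rewrite <- Rsqr_pow2, Rsqr_def, norm_sq in H1, H2.
  replace (dot n g (vsub x z)) with ((1 - t) * dot n g (vsub x y)) in H1 by (unfold z; dot_lin).
  replace (dot n g (vsub y z)) with (- t * dot n g (vsub x y)) in H2 by (unfold z; dot_lin).
  replace (dot n (vsub x z) (vsub x z)) with ((1 - t) * (1 - t) * dot n (vsub x y) (vsub x y))
    in H1 by (unfold z; dot_lin).
  replace (dot n (vsub y z) (vsub y z)) with (t * t * dot n (vsub x y) (vsub x y))
    in H2 by (unfold z; dot_lin).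
  nra.
Qed.

Lemma subgrad_gap_le n F x g y : subgrad n F x g -> inRn n y ->
  F x - F y <= norm n g * norm n (vsub y x).
Proof.
  intros [_ Hg] Hy. specialize (Hg y Hy).
  pose proof (dot_Cauchy_Schwarz n g (vsub y x)).
  pose proof (Rle_abs (- dot n g (vsub y x))) as Habs. rewrite Rabs_Ropp in Habs.
  lra.
Qed.

Lemma convex_lsc n F x : convex_fun n F -> inRn n x ->
  exists G, forall y, inRn n y -> F x <= F y + G * norm n (vsub y x).
Proof.
  intros HF Hx. destruct (subgrad_exists n F x HF Hx) as [g Hg].
  exists (norm n g). intros y Hy. pose proof (subgrad_gap_le n F x g y Hg Hy). lra.
Qed.

Section BoundedSubgradients.

Variables (n : nat) (F : vec -> R) (C : R) (S : vec -> Prop).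
Hypothesis F_convex : convex_fun n F.
Hypothesis S_inRn : forall x, S x -> inRn n x.
Hypothesis subgrad_bounded : forall x g, S x -> subgrad n F x g -> norm n g <= C.

Lemma subgrad_bound_nonneg x : S x -> 0 <= C.
Proof.
  intros Sx. destruct (subgrad_exists n F x F_convex (S_inRn x Sx)) as [g Hg].
  pose proof (subgrad_bounded x g Sx Hg). pose proof (norm_nonneg n g). lra.
Qed.

Lemma convex_lipschitz_on x y : S x -> S y -> F x - F y <= C * norm n (vsub y x).
Proof.
  intros Sx Sy. destruct (subgrad_exists n F x F_convex (S_inRn x Sx)) as [g Hg].
  pose proof (subgrad_gap_le n F x g y Hg (S_inRn y Sy)).
  pose proof (Rmult_le_compat_r _ _ _ (norm_nonneg n (vsub y x)) (subgrad_bounded x g Sx Hg)).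
  lra.
Qed.

End BoundedSubgradients.

Lemma sumfun_convex n m fs : (forall i, (i < m)%nat -> convex_fun n (fs i)) ->
  convex_fun n (sumfun m fs).
Proof.
  induction m as [|m IH]; intros H x y t Hx Hy Ht; unfold sumfun; simpl; [lra|].
  pose proof (IH (fun i Hi => H i ltac:(lia)) x y t Hx Hy Ht) as Hsum. unfold sumfun in Hsum.
  pose proof (H m (Nat.lt_succ_diag_r m) x y t Hx Hy Ht). lra.
Qed.

Lemma argmin_set_convex n F X : (forall x, X x -> inRn n x) -> convex_set n X ->
  convex_fun n F -> convex_set n (argmin_set F X).
Proof.
  intros HXn HX HF x y t [Xx Hx] [Xy Hy] Ht. split; [apply HX; assumption|].
  intros z Xz. pose proof (HF x y t (HXn x Xx) (HXn y Xy) Ht).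
  pose proof (Hx z Xz). pose proof (Hy z Xz). nra.
Qed.

Lemma strongly_convex_min_unique n h mu S x y : 0 < mu -> strongly_convex n h mu ->
  (forall z, S z -> inRn n z) -> convex_set n S -> is_min_on h S x -> is_min_on h S y -> x = y.
Proof.
  intros Hmu Hh HS HSc [Sx Hx] [Sy Hy].
  set (z := vadd (vscal (1 / 2) x) (vscal (1 - 1 / 2) y)).
  assert (Hz := strongly_convex_segment n h mu x y (1 / 2) Hh (HS x Sx) (HS y Sy) ltac:(lra)).
  fold z in Hz.
  assert (Sz : S z) by (apply HSc; [assumption | assumption | lra]).
  pose proof (Hx z Sz). pose proof (Hx y Sy). pose proof (Hy x Sx).
  pose proof (dot_nonneg n (vsub x y)).
  assert (D0 : dot n (vsub x y) (vsub x y) = 0) by nra.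
  apply functional_extensionality; intro i.
  destruct (Nat.lt_ge_cases i n) as [Hi|Hi].
  - pose proof (dot_self_eq0 n _ D0 i Hi) as Ei. unfold vsub in Ei. lra.
  - rewrite (HS x Sx i Hi), (HS y Sy i Hi). reflexivity.
Qed.

Lemma Rle_of_forall_shrink P K : (forall t, 0 < t <= 1 -> (1 - t) * P <= K) -> P <= K.
Proof.
  intros H. destruct (Rle_or_lt P K) as [|HKP]; [assumption | exfalso].
  assert (HK : 0 <= K) by (specialize (H 1); lra).
  set (t := (P - K) / (2 * P)).
  assert (Ht : 0 < t <= 1).
  { unfold t. split; [apply Rdiv_lt_0_compat; lra|].
    apply (Rmult_le_reg_r (2 * P)); [lra|]. field_simplify; lra. }
  specialize (H t Ht).
  replace ((1 - t) * P) with ((P + K) / 2) in H by (unfold t; field; lra).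
  lra.
Qed.

Lemma Un_cv_const c : Un_cv (fun _ => c) c.
Proof. intros eps Heps. exists 0%nat. intros. unfold R_dist. rewrite Rminus_diag, Rabs_R0. exact Heps. Qed.

Lemma Rle_0_of_le_Un_cv0 c (s : nat -> R) : (forall j, c <= s j) -> Un_cv s 0 -> c <= 0.
Proof. intros Hs Hcv. exact (Rle_cv_lim Hs (Un_cv_const c) Hcv). Qed.

Lemma Un_cv_subseq u l (psi : nat -> nat) : (forall j, (j <= psi j)%nat) ->
  Un_cv u l -> Un_cv (fun j => u (psi j)) l.
Proof.
  intros Hpsi Hu eps Heps. destruct (Hu eps Heps) as [N HN].
  exists N. intros j Hj. apply HN. specialize (Hpsi j). lia.
Qed.

Lemma strict_mono_ge_id (phi : nat -> nat) : (forall k, (phi k < phi (S k))%nat) ->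
  forall k, (k <= phi k)%nat.
Proof. intros H k. induction k as [|k IH]; [lia|]. specialize (H k). lia. Qed.

Lemma not_Un_cv0_far_subseq s : ~ Un_cv s 0 ->
  exists eps (kap : nat -> nat), 0 < eps /\ forall N, (N <= kap N)%nat /\ eps <= Rabs (s (kap N)).
Proof.
  intros Hs. apply not_all_ex_not in Hs as [eps Hs].
  apply imply_to_and in Hs as [Heps HN].
  assert (Hfar : forall N, exists k, (N <= k)%nat /\ eps <= Rabs (s k)).
  { intro N. apply not_ex_all_not with (n := N) in HN.
    apply not_all_ex_not in HN as [k Hk]. apply imply_to_and in Hk as [Hk Hfar].
    exists k. split; [lia|]. unfold R_dist in Hfar. rewrite Rminus_0_r in Hfar. lra. }
  destruct (choice _ Hfar) as [kap Hkap]. exists eps, kap. split; [lra | exact Hkap].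
Qed.

Lemma seq_compact_cv_of_unique_cluster n X (u : nat -> vec) p : seq_compact n X ->
  (forall k, X (u k)) ->
  (forall (psi : nat -> nat) l, (forall j, (j <= psi j)%nat) -> X l ->
     Un_cv (fun j => norm n (vsub (u (psi j)) l)) 0 -> l = p) ->
  Un_cv (fun k => norm n (vsub (u k) p)) 0.
Proof.
  intros HXc Xu Hcluster. apply NNPP. intros Hnot.
  destruct (not_Un_cv0_far_subseq _ Hnot) as (eps & kap & Heps & Hkap).
  destruct (HXc (fun j => u (kap j)) (fun j => Xu (kap j))) as (phi & l & Hphi & Xl & Hcv).
  assert (Hl : l = p).
  { apply (Hcluster (fun j => kap (phi j))); [|exact Xl | exact Hcv].
    intro j. pose proof (strict_mono_ge_id phi Hphi j). pose proof (proj1 (Hkap (phi j))). lia. }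
  subst l. destruct (Hcv eps Heps) as [N HN]. specialize (HN N (le_n N)).
  pose proof (proj2 (Hkap (phi N))). unfold R_dist in HN. rewrite Rminus_0_r in HN. lra.
Qed.

Section RegularizedMinimizers.

Variables (n : nat) (X : vec -> Prop) (f h : vec -> R) (mu : R).
Hypothesis X_inRn : forall x, X x -> inRn n x.
Hypothesis X_convex : convex_set n X.
Hypothesis f_convex : convex_fun n f.
Hypothesis mu_pos : 0 < mu.
Hypothesis h_strongly_convex : strongly_convex n h mu.

Let h_convex : convex_fun n h := proj1 h_strongly_convex.

Section Stability.

Variable C : R.
Hypothesis h_subgrad_bounded : forall x g, X x -> subgrad n h x g -> norm n g <= C.

Variables (a b : vec) (l0 l1 : R).
Hypothesis l1_pos : 0 < l1.
Hypothesis a_min : is_min_on (fun x => f x + l1 * h x) X a.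
Hypothesis b_min : is_min_on (fun x => f x + l0 * h x) X b.

Lemma regularized_min_segment_ineq t : 0 < t <= 1 ->
  (1 - t) * (l1 * mu * (norm n (vsub a b) * norm n (vsub a b)))
    <= Rabs (l0 - l1) * C * norm n (vsub a b).
Proof.
  intros Ht. assert (Ht' : 0 <= t <= 1) by lra.
  destruct a_min as [Xa Ha]. destruct b_min as [Xb Hb].
  set (D := norm n (vsub a b)).
  set (At := vadd (vscal t b) (vscal (1 - t) a)).
  set (Bt := vadd (vscal t a) (vscal (1 - t) b)).
  assert (XAt : X At) by (apply X_convex; assumption).
  assert (XBt : X Bt) by (apply X_convex; assumption).
  assert (HaAt := Ha At XAt). assert (HbBt := Hb Bt XBt). cbv beta in HaAt, HbBt.
  assert (Hf : f At + f Bt <= f a + f b).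
  { pose proof (f_convex b a t (X_inRn b Xb) (X_inRn a Xa) Ht') as HA.
    pose proof (f_convex a b t (X_inRn a Xa) (X_inRn b Xb) Ht') as HB.
    fold At in HA. fold Bt in HB. lra. }
  assert (Hh : h At + h Bt <= h a + h b - mu * (t * (1 - t)) * (D * D)).
  { pose proof (strongly_convex_segment n h mu b a t h_strongly_convex
                  (X_inRn b Xb) (X_inRn a Xa) Ht') as HA.
    pose proof (strongly_convex_segment n h mu a b t h_strongly_convex
                  (X_inRn a Xa) (X_inRn b Xb) Ht') as HB.
    fold At in HA. fold Bt in HB.
    replace (dot n (vsub b a) (vsub b a)) with (D * D) in HA
      by (unfold D; rewrite norm_vsub_sym; apply norm_sq).
    replace (dot n (vsub a b) (vsub a b)) with (D * D) in HB by apply norm_sq.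
    lra. }
  assert (HBt : Rabs (h Bt - h b) <= C * (t * D)).
  { assert (EBt : norm n (vsub Bt b) = t * D).
    { replace (vsub Bt b) with (vscal t (vsub a b)) by (unfold Bt; vec_ext).
      rewrite norm_scal, Rabs_pos_eq by lra. reflexivity. }
    pose proof (convex_lipschitz_on n h C X h_convex X_inRn h_subgrad_bounded b Bt Xb XBt) as H1.
    pose proof (convex_lipschitz_on n h C X h_convex X_inRn h_subgrad_bounded Bt b XBt Xb) as H2.
    rewrite norm_vsub_sym in H2. rewrite EBt in H1, H2.
    apply Rabs_le. lra. }
  assert (Hmix : (l0 - l1) * (h Bt - h b) <= Rabs (l0 - l1) * (C * (t * D))).
  { eapply Rle_trans; [apply Rle_abs|]. rewrite Rabs_mult.
    apply Rmult_le_compat_l; [apply Rabs_pos | exact HBt]. }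
  assert (Hdecomp : 0 <= l1 * ((h At - h a) + (h Bt - h b)) + (l0 - l1) * (h Bt - h b)) by nra.
  assert (Hl1 : l1 * ((h At - h a) + (h Bt - h b)) <= l1 * (- (mu * (t * (1 - t)) * (D * D))))
    by (apply Rmult_le_compat_l; lra).
  nra.
Qed.

Lemma regularized_min_dist : norm n (vsub a b) <= C / mu * Rabs (1 - l0 / l1).
Proof.
  set (D := norm n (vsub a b)).
  assert (HD : 0 <= D) by apply norm_nonneg.
  assert (HC : 0 <= C)
    by exact (subgrad_bound_nonneg n h C X h_convex X_inRn h_subgrad_bounded a (proj1 a_min)).
  assert (Hsq := Rle_of_forall_shrink _ _ regularized_min_segment_ineq). fold D in Hsq.
  assert (Hlin : l1 * mu * D <= Rabs (l0 - l1) * C).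
  { destruct (Req_dec D 0) as [->|HD0].
    - rewrite Rmult_0_r. apply Rmult_le_pos; [apply Rabs_pos | exact HC].
    - apply (Rmult_le_reg_r D); [lra | nra]. }
  replace (C / mu * Rabs (1 - l0 / l1)) with (Rabs (l0 - l1) * C / (l1 * mu)).
  - apply (Rmult_le_reg_l (l1 * mu)); [nra|].
    replace (l1 * mu * (Rabs (l0 - l1) * C / (l1 * mu))) with (Rabs (l0 - l1) * C)
      by (field; lra).
    exact Hlin.
  - replace (1 - l0 / l1) with ((l1 - l0) * / l1) by (field; lra).
    rewrite Rabs_mult, Rabs_inv, (Rabs_pos_eq l1), Rabs_minus_sym by lra.
    field; lra.
Qed.

End Stability.

Section Convergence.

Variables (xh : vec) (lam : nat -> R) (xl : nat -> vec).
Hypothesis X_seq_compact : seq_compact n X.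
Hypothesis xh_min : is_min_on h (argmin_set f X) xh.
Hypothesis lam_pos : forall k, 0 < lam k.
Hypothesis xl_min : forall k, is_min_on (fun x => f x + lam k * h x) X (xl k).
Hypothesis lam_cv0 : Un_cv lam 0.

Lemma regularized_min_h_le k : h (xl k) <= h xh.
Proof.
  destruct xh_min as [[Xxh Hfxh] _]. destruct (xl_min k) as [Xk Hk].
  specialize (Hk xh Xxh). specialize (Hfxh (xl k) Xk). cbv beta in Hk.
  apply (Rmult_le_reg_l (lam k)); [apply lam_pos | lra].
Qed.

Section Cluster.

Variables (psi : nat -> nat) (l : vec).
Hypothesis psi_ge_id : forall j, (j <= psi j)%nat.
Hypothesis l_in_X : X l.
Hypothesis l_cluster : Un_cv (fun j => norm n (vsub (xl (psi j)) l)) 0.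

Let r j := norm n (vsub (xl (psi j)) l).

Lemma cluster_f_min : argmin_set f X l.
Proof.
  split; [exact l_in_X|]. intros z Xz.
  destruct (convex_lsc n f l f_convex (X_inRn l l_in_X)) as [Gf Hf].
  destruct (convex_lsc n h l h_convex (X_inRn l l_in_X)) as [Gh Hh].
  enough (f l - f z <= 0) by lra.
  apply (Rle_0_of_le_Un_cv0 _ (fun j => lam (psi j) * (h z - h l + Gh * r j) + Gf * r j)).
  - intro j. destruct (xl_min (psi j)) as [Xj Hj]. specialize (Hj z Xz). cbv beta in Hj.
    pose proof (Hf _ (X_inRn _ Xj)). pose proof (Hh _ (X_inRn _ Xj)).
    pose proof (lam_pos (psi j)). fold (r j) in *. nra.
  - replace 0 with (0 * (h z - h l + Gh * 0) + Gf * 0) by ring.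
    apply (CV_plus (fun j => lam (psi j) * (h z - h l + Gh * r j)) (fun j => Gf * r j)).
    + apply (CV_mult (fun j => lam (psi j)) (fun j => h z - h l + Gh * r j)).
      * exact (Un_cv_subseq lam 0 psi psi_ge_id lam_cv0).
      * apply (CV_plus (fun _ => h z - h l) (fun j => Gh * r j)); [apply Un_cv_const|].
        apply (CV_mult (fun _ => Gh) r); [apply Un_cv_const | exact l_cluster].
    + apply (CV_mult (fun _ => Gf) r); [apply Un_cv_const | exact l_cluster].
Qed.

Lemma cluster_h_le : h l <= h xh.
Proof.
  destruct (convex_lsc n h l h_convex (X_inRn l l_in_X)) as [Gh Hh].
  enough (h l - h xh <= 0) by lra.
  apply (Rle_0_of_le_Un_cv0 _ (fun j => Gh * r j)).
  - intro j. pose proof (Hh _ (X_inRn _ (proj1 (xl_min (psi j))))).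
    pose proof (regularized_min_h_le (psi j)). fold (r j) in *. lra.
  - replace 0 with (Gh * 0) by ring.
    apply (CV_mult (fun _ => Gh) r); [apply Un_cv_const | exact l_cluster].
Qed.

Lemma cluster_eq_bilevel_min : l = xh.
Proof.
  apply (strongly_convex_min_unique n h mu (argmin_set f X)); try assumption.
  - intros z [Xz _]. exact (X_inRn z Xz).
  - exact (argmin_set_convex n f X X_inRn X_convex f_convex).
  - split; [exact cluster_f_min|]. intros z Hz.
    pose proof ((proj2 xh_min) z Hz). pose proof cluster_h_le. lra.
Qed.

End Cluster.

Lemma regularized_min_cv : Un_cv (fun k => norm n (vsub (xl k) xh)) 0.
Proof.
  apply (seq_compact_cv_of_unique_cluster n X); [exact X_seq_compact | intro k; apply xl_min|].
  exact cluster_eq_bilevel_min.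
Qed.

End Convergence.

End RegularizedMinimizers.

Theorem lemma1
  (n m : nat) (X : vec -> Prop) (fs : nat -> vec -> R) (h : vec -> R)
  (mu_h C_f C_h : R) (xh : vec) (lam : nat -> R) (xl : nat -> vec)
  (HXn : forall x, X x -> inRn n x)
  (HXne : exists x, X x)
  (HXc : seq_compact n X)
  (HXcv : convex_set n X)
  (Hfs : forall i, (i < m)%nat -> convex_fun n (fs i))
  (Hmu : 0 < mu_h)
  (Hh : strongly_convex n h mu_h)
  (HCf : forall i x g, (i < m)%nat -> X x -> subgrad n (fs i) x g -> norm n g <= C_f)
  (HCh : forall x g, X x -> subgrad n h x g -> norm n g <= C_h)
  (Hxh : is_min_on h (argmin_set (sumfun m fs) X) xh)
  (Hlam : forall k, 0 < lam k)
  (Hxl : forall k, is_min_on (fun x => sumfun m fs x + lam k * h x) X (xl k)) :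
  (forall k, (1 <= k)%nat ->
     norm n (vsub (xl k) (xl (k - 1)%nat))
       <= C_h / mu_h * Rabs (1 - lam (k - 1)%nat / lam k)) /\
  (Un_cv lam 0 -> Un_cv (fun k => norm n (vsub (xl k) xh)) 0).
Proof.
  assert (Hf : convex_fun n (sumfun m fs)) by exact (sumfun_convex n m fs Hfs).
  split.
  - intros k _.
    exact (regularized_min_dist n X (sumfun m fs) h mu_h HXn HXcv Hf Hmu Hh C_h HCh
             (xl k) (xl (k - 1)%nat) (lam (k - 1)%nat) (lam k) (Hlam k) (Hxl k) (Hxl (k - 1)%nat)).
  - exact (regularized_min_cv n X (sumfun m fs) h mu_h HXn HXcv Hf Hmu Hh xh lam xl
             HXc Hxh Hlam Hxl).
Qed.
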